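(* Let $0 < c \le 1$ be a constant, let $n$ be a positive integer, let $\log n/\sqrt{n} \ll p = p(n) \le 1$ and let $D = (V,E) \in \mathcal{D}(n,p)$. Let $\ell = \ell(n) \le n$ be an integer satisfying $\ell p^2 \gg \log n$. Then a.a.s. (i) for every $A \subseteq V$ of size $a$ with $c\ell p \le a \le 2\ell p$ we have $|\{u \in V\setminus A : \deg^+_D(u,A) \ge 2pa\}| \le \ell p$; (ii) for every $A \subseteq V$ of size $a$ with $\ell p^{3/2} \le a \le 2\ell p$ we have $|\{u \in V \setminus A : \deg^+_D(u,A) \ge 7\sqrt{p}\,a\}| \le \ell p^{3/2}$.
   Context: $\mathcal{D}(n,p)$ is the random digraph on $[n]$ where each ordered pair $(u,v)$, $u\ne v$, is an arc independently with probability $p$. $\deg^+_D(u,A)$ is the number of $a \in A$ with $(u,a)$ an arc of $D$. a.a.s. means with probability tending to $1$ as $n\to\infty$; $f \ll g$ means $f/g\to 0$; $\log$ is natural. *)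

From HB Require Import structures.
From mathcomp Require Import all_boot all_order all_algebra.
From mathcomp Require Import all_classical all_reals all_analysis.
Set Implicit Arguments. Unset Strict Implicit. Unset Printing Implicit Defensive.
Import Order.TTheory GRing.Theory Num.Theory.
Local Open Scope ring_scope.

Definition digraph (n : nat) := {set ('I_n * 'I_n)}.

Definition loopless (n : nat) (D : digraph n) : bool :=
  [forall x in D, x.1 != x.2].

(* Probability of the digraph D in D(n,p): each arc (u,v), u<>v,
   present independently with probability p. *)
Definition dnp_weight (R : realType) (n : nat) (p : R) (D : digraph n) : R :=
  \prod_(x : 'I_n * 'I_n | x.1 != x.2) (if x \in D then p else 1 - p).

Definition dnp_prob (R : realType) (n : nat) (p : R) (E : pred (digraph n)) : R :=
  \sum_(D : digraph n | loopless D && E D) dnp_weight p D.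

Definition outdeg (n : nat) (D : digraph n) (u : 'I_n) (A : {set 'I_n}) : nat :=
  #|[set a in A | (u, a) \in D]|.

Definition prop_i (R : realType) (n : nat) (c p l : R) (D : digraph n) : Prop :=
  forall A : {set 'I_n},
    c * l * p <= (#|A|%:R : R) <= 2 * l * p ->
    (#|[set u in ~: A | 2 * p * #|A|%:R <= ((outdeg D u A)%:R : R)]|%:R : R)
      <= l * p.

(* Property (ii): p^{3/2} is written p * sqrt p. *)
Definition prop_ii (R : realType) (n : nat) (p l : R) (D : digraph n) : Prop :=
  forall A : {set 'I_n},
    l * (p * Num.sqrt p) <= (#|A|%:R : R) <= 2 * l * p ->
    (#|[set u in ~: A | 7 * Num.sqrt p * #|A|%:R <= ((outdeg D u A)%:R : R)]|%:R : R)
      <= l * (p * Num.sqrt p).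

From HB Require Import structures.
From mathcomp Require Import all_boot all_order all_algebra.
From mathcomp Require Import all_classical all_reals all_analysis.
From mathcomp Require Import ring lra.
Import Order.TTheory GRing.Theory Num.Theory.
Import numFieldNormedType.Exports.
Local Open Scope ring_scope.
Set Implicit Arguments. Unset Strict Implicit.

(* Fix A with |A| = a and B with |B| = b.  By the exponential Markov inequality
   with parameter 1/4 and the independence of the ab arcs from B to A, the
   probability that every u in B has deg^+(u, A) >= s a is at most
   exp(-(s/4 - p/3) a b).  In both (i) and (ii), since l p^2 >> log n, there is
   k <= s/4 - p/3 with k a >= 6 log n and k b >= 6 log n whenever A and B are
   large enough to witness a failure, so this probability is at most
   n^-(a + b + 2).  A union bound over all pairs (A, B) gives failure
   probability at most n^-2 (1 + 1/n)^(2n) <= e^2 / n^2. *)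

Lemma sumr_set_prod (R : comPzSemiRingType) (T : finType) (F : T -> bool -> R) :
  \sum_(S : {set T}) \prod_(x : T) F x (x \in S) =
  \prod_(x : T) (F x true + F x false).
Proof.
under eq_bigr do rewrite -big_bool.
rewrite bigA_distr_bigA /= (reindex (fun f : {ffun T -> bool} => [set x | f x])) /=.
  by apply: eq_bigr => f _; apply: eq_bigr => x _; rewrite inE.
exists (fun S : {set T} => [ffun x => x \in S]) => [f _|S _].
  by apply/ffunP => x; rewrite ffunE inE.
by apply/setP => x; rewrite inE ffunE.
Qed.

Lemma sumr_set_exp_card (R : comPzSemiRingType) (T : finType) (z : R) :
  \sum_(S : {set T}) z ^+ #|S| = (z + 1) ^+ #|T|.
Proof.
transitivity (\sum_(S : {set T}) \prod_(x : T) (if x \in S then z else 1)).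
  by apply: eq_bigr => S _; rewrite -prodr_const big_mkcond.
by rewrite (sumr_set_prod (fun _ (b : bool) => if b then z else 1)) prodr_const.
Qed.

Lemma sumr_set_inv_exp_card_le (R : realType) (n : nat) : (0 < n)%N ->
  \sum_(S : {set 'I_n}) (n%:R^-1 : R) ^+ #|S| <= expR 1.
Proof.
move=> n0; rewrite sumr_set_exp_card card_ord.
apply: (@le_trans _ _ (expR (n%:R^-1) ^+ n)).
  by rewrite lerXn2r ?nnegrE ?addr_ge0 ?invr_ge0 ?expR_ge0 // addrC expR_ge1Dx.
by rewrite -expRM_natl mulfV // pnatr_eq0 -lt0n.
Qed.

Lemma expR_quarter_le (R : realType) : expR (1 / 4 : R) <= 4 / 3.
Proof.
have := expRxMexpNx_1 (1 / 4 : R).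
have : 3 / 4 <= expR (- (1 / 4 : R)) by apply: le_trans (expR_ge1Dx _); lra.
have := expR_ge0 (1 / 4 : R).
nra.
Qed.

Lemma expR_neg_mul_le_invn_exp (R : realType) (n a b : nat) (k : R) :
  (0 < n)%N -> (0 < a)%N -> (0 < b)%N ->
  6 * ln n%:R <= k * a%:R -> 6 * ln n%:R <= k * b%:R ->
  expR (- (k * (a%:R * b%:R))) <= n%:R^-1 ^+ (2 + (a + b)).
Proof.
move=> n0 a0 b0 ka kb; set L := ln (n%:R : R).
have L0 : 0 <= L by rewrite ln_ge0 // ler1n.
have a1 : 1 <= (a%:R : R) by rewrite ler1n.
have b1 : 1 <= (b%:R : R) by rewrite ler1n.
rewrite -[n%:R^-1]lnK ?posrE ?invr_gt0 ?ltr0n // lnV ?posrE ?ltr0n // -/L.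
rewrite -expRM_natl ler_expR !natrD.
have : 0 <= (k * a%:R - 6 * L) * b%:R by rewrite mulr_ge0 ?subr_ge0 // ler0n.
have : 0 <= (k * b%:R - 6 * L) * a%:R by rewrite mulr_ge0 ?subr_ge0 // ler0n.
nra.
Qed.

Definition exists_attracting_set (R : realType) (n : nat) (s al be : R)
    (D : digraph n) : bool :=
  [exists A : {set 'I_n}, (al <= #|A|%:R) &&
     (be < #|[set u in ~: A | s * #|A|%:R <= (outdeg D u A)%:R]|%:R)].

Lemma no_attracting_set (R : realType) (n : nat) (s al be : R) (D : digraph n) :
  ~~ exists_attracting_set s al be D -> forall A : {set 'I_n}, al <= #|A|%:R ->
  #|[set u in ~: A | s * #|A|%:R <= (outdeg D u A)%:R]|%:R <= be.
Proof.
by move=> /existsPn noA A alA; rewrite leNgt; apply: contraNN (noA A) => ->; rewrite alA.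
Qed.

Section RandomDigraph.
Variables (R : realType) (n : nat) (p : R).
Implicit Types (D : digraph n) (A B : {set 'I_n}) (E : pred (digraph n)).

Lemma dnp_expect_prod (g : 'I_n * 'I_n -> R) :
  \sum_(D : digraph n | loopless D)
     dnp_weight p D * \prod_(x : 'I_n * 'I_n) (if x \in D then g x else 1)
  = \prod_(x : 'I_n * 'I_n | x.1 != x.2) (p * g x + (1 - p)).
Proof.
pose F (x : 'I_n * 'I_n) (b : bool) : R :=
  if x.1 == x.2 then (if b then 0 else 1) else (if b then p * g x else 1 - p).
have F_loop x : x.1 == x.2 -> F x false = 1 by rewrite /F => ->.
transitivity (\sum_(D : digraph n) \prod_(x : 'I_n * 'I_n) F x (x \in D)); last first.
  rewrite sumr_set_prod (bigID (fun x : 'I_n * 'I_n => x.1 == x.2)) /=.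
  rewrite big1 ?mul1r => [|x xl]; last by rewrite /F xl add0r.
  by apply: eq_bigr => x xl; rewrite /F (negbTE xl).
rewrite big_mkcond /=; apply: eq_bigr => D _.
rewrite [RHS](bigID (fun x : 'I_n * 'I_n => x.1 == x.2)) /=.
case: (boolP (loopless D)) => [/forallP loopD | /forallPn[x]]; last first.
  rewrite negb_imply negbK => /andP[xD xl].
  by rewrite (bigD1 x) //= /F xl xD !mul0r.
have notin_loop x : x.1 == x.2 -> x \notin D.
  by move=> xl; apply/negP => xD; have := loopD x; rewrite xD xl.
rewrite [X in _ = X * _]big1 => [|x xl]; last by rewrite (negbTE (notin_loop x xl)) F_loop.
rewrite mul1r [X in _ * X](bigID (fun x : 'I_n * 'I_n => x.1 == x.2)) /=.
rewrite [X in _ * (X * _)]big1 => [|x xl]; last by rewrite (negbTE (notin_loop x xl)).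
rewrite mul1r /dnp_weight -big_split /=; apply: eq_bigr => x xl.
by rewrite /F (negbTE xl); case: (x \in D); rewrite ?mulr1.
Qed.

Lemma dnp_weight_sum1 : \sum_(D : digraph n | loopless D) dnp_weight p D = 1.
Proof.
transitivity (\sum_(D : digraph n | loopless D)
    dnp_weight p D * \prod_(x : 'I_n * 'I_n) (if x \in D then 1 else 1)).
  by apply: eq_bigr => D _; rewrite big1 ?mulr1 // => x _; case: ifP.
by rewrite dnp_expect_prod; apply: big1 => x _; rewrite mulr1 subrKC.
Qed.

Lemma prod_arcs_outdeg (z : R) A B D :
  \prod_(x : 'I_n * 'I_n)
     (if x \in D then (if (x.1 \in B) && (x.2 \in A) then z else 1) else 1)
  = \prod_(u in B) z ^+ outdeg D u A.
Proof.
transitivity (\prod_(u : 'I_n) \prod_(a : 'I_n)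
    (if (u \in B) && (a \in A) && ((u, a) \in D) then z else 1)).
  rewrite pair_bigA /=; apply: eq_bigr => [[u a]] _ /=.
  by case: ((u, a) \in D); case: (u \in B); case: (a \in A).
rewrite [RHS]big_mkcond /=; apply: eq_bigr => u _.
case: (boolP (u \in B)) => uB /=; last by rewrite big1.
by rewrite /outdeg -prodr_const [RHS]big_mkcond; apply: eq_bigr => a _; rewrite inE.
Qed.

Hypothesis p01 : 0 <= p <= 1.

Lemma dnp_weight_ge0 D : 0 <= dnp_weight p D.
Proof.
case/andP: p01 => p0 p1; apply: prodr_ge0 => x _.
by case: ifP => _ //; rewrite subr_ge0.
Qed.

Lemma dnp_prob_le1 E : dnp_prob p E <= 1.
Proof.
rewrite /dnp_prob -dnp_weight_sum1 big_mkcondr /=.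
by apply: ler_sum => D _; case: ifP => // _; exact: dnp_weight_ge0.
Qed.

Lemma dnp_prob_compl_le E E1 E2 : (forall D, ~~ E D -> E1 D || E2 D) ->
  1 - dnp_prob p E <= dnp_prob p E1 + dnp_prob p E2.
Proof.
move=> E_cover; rewrite -dnp_weight_sum1 (bigID E) /= addrAC subrr add0r.
rewrite /dnp_prob !big_mkcondr -big_split /=; apply: ler_sum => D _.
have w0 := dnp_weight_ge0 D.
case: (boolP (E D)) => ED /=; first by rewrite addr_ge0 //; case: ifP.
case: (boolP (E1 D)) => E1D; first by rewrite lerDl; case: ifP.
by move: (E_cover D ED); rewrite (negbTE E1D) /= => ->; rewrite add0r.
Qed.

Lemma prod_arc_factors_le A B (w : R) : 1 <= w ->
  \prod_(x : 'I_n * 'I_n | x.1 != x.2)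
     (p * (if (x.1 \in B) && (x.2 \in A) then w else 1) + (1 - p))
  <= (1 - p + p * w) ^+ (#|B| * #|A|).
Proof.
move=> w1; case/andP: p01 => p0 p1.
pose psi (x : 'I_n * 'I_n) := if (x.1 \in B) && (x.2 \in A) then 1 - p + p * w else 1.
have psi1 x : 1 <= psi x by rewrite /psi; case: ifP => // _; nra.
have -> : (1 - p + p * w) ^+ (#|B| * #|A|) = \prod_(x : 'I_n * 'I_n) psi x.
  rewrite -cardsX -prodr_const big_mkcond /=; apply: eq_bigr => [[u a]] _.
  by rewrite finset.in_setX.
have loops_ge1 : 1 <= \prod_(x : 'I_n * 'I_n | x.1 == x.2) psi x.
  by apply: (big_ind (fun y => 1 <= y)) => // y z; exact: mulr_ege1.
have -> : \prod_(x : 'I_n * 'I_n | x.1 != x.2)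
    (p * (if (x.1 \in B) && (x.2 \in A) then w else 1) + (1 - p))
    = \prod_(x : 'I_n * 'I_n | x.1 != x.2) psi x.
  by apply: eq_bigr => x _; rewrite /psi; case: ifP => _; rewrite ?mulr1 ?subrKC // addrC.
rewrite [X in _ <= X](bigID (fun x : 'I_n * 'I_n => x.1 == x.2)) /= mulrC.
rewrite -[X in X <= _]mulr1; apply: ler_wpM2l loops_ge1.
by apply: prodr_ge0 => x _; apply: le_trans (psi1 x).
Qed.

Lemma dnp_prob_all_outdeg_ge A B (t : R) :
  dnp_prob p (fun D => [forall u in B, t <= (outdeg D u A)%:R])
  <= expR (- (#|B|%:R * (t / 4))) * (1 - p + p * expR (1 / 4)) ^+ (#|B| * #|A|).
Proof.
set w := expR (1 / 4 : R); set K := expR (- (#|B|%:R * (t / 4))).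
pose g (x : 'I_n * 'I_n) := if (x.1 \in B) && (x.2 \in A) then w else 1.
have w1 : 1 <= w by rewrite -expR0 ler_expR.
have g1 x : 1 <= g x by rewrite /g; case: ifP.
pose X D := \prod_(x : 'I_n * 'I_n) (if x \in D then g x else 1).
have X0 D : 0 <= X D by apply: prodr_ge0 => x _; case: ifP => // _; exact: le_trans (g1 x).
have markov D : [forall u in B, t <= (outdeg D u A)%:R] -> 1 <= K * X D.
  move=> /forallP degB; rewrite /X prod_arcs_outdeg.
  apply: (@le_trans _ _ (K * \prod_(u in B) expR (t / 4))).
    by rewrite prodr_const -expRM_natl /K -expRD addNr expR0.
  apply: ler_wpM2l; first exact: expR_ge0.
  apply: ler_prod => u uB; rewrite expR_ge0 /= /w -expRM_natl ler_expR mul1r.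
  by rewrite ler_wpM2r //; have := degB u; rewrite uB.
apply: (@le_trans _ _ (\sum_(D : digraph n | loopless D) dnp_weight p D * (K * X D))).
  rewrite /dnp_prob big_mkcondr /=; apply: ler_sum => D _.
  have w0 := dnp_weight_ge0 D.
  case: ifP => [/markov ge1|_]; last by rewrite !mulr_ge0 ?expR_ge0.
  by rewrite -[X in X <= _]mulr1 ler_wpM2l.
under eq_bigr do rewrite mulrCA.
rewrite -mulr_sumr dnp_expect_prod ler_wpM2l ?expR_ge0 //.
exact: prod_arc_factors_le.
Qed.

(* The parameter 1/4 of the Markov inequality is chosen so that e^(1/4) - 1 <= 1/3. *)
Lemma dnp_prob_all_outdeg_ge_expR A B (s : R) :
  dnp_prob p (fun D => [forall u in B, s * #|A|%:R <= (outdeg D u A)%:R])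
  <= expR (- ((s / 4 - p / 3) * (#|A|%:R * #|B|%:R))).
Proof.
case/andP: p01 => p0 p1.
apply: le_trans (dnp_prob_all_outdeg_ge A B _) _.
have mgf_ge0 : 0 <= 1 - p + p * expR (1 / 4) by rewrite addr_ge0 ?subr_ge0 ?mulr_ge0 ?expR_ge0.
have mgf_le : 1 - p + p * expR (1 / 4) <= expR (p / 3).
  apply: le_trans (expR_ge1Dx _) => /=.
  have := ler_wpM2l p0 (expR_quarter_le R); lra.
apply: le_trans (ler_wpM2l (expR_ge0 _) (lerXn2r _ _ _ mgf_le)) _;
  rewrite ?nnegrE ?expR_ge0 //.
rewrite -expRM_natl -expRD natrM.
by rewrite [X in expR X <= _](_ : _ = - ((s / 4 - p / 3) * (#|A|%:R * #|B|%:R))) //; ring.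
Qed.

Lemma dnp_prob_attracting_set_le_sum (s al be : R) :
  dnp_prob p (exists_attracting_set (n := n) s al be)
  <= \sum_(A : {set 'I_n} | al <= #|A|%:R) \sum_(B : {set 'I_n} | be < #|B|%:R)
       dnp_prob p (fun D => [forall u in B, s * #|A|%:R <= (outdeg D u A)%:R]).
Proof.
rewrite /dnp_prob big_mkcondr /=.
under [X in _ <= X]eq_bigr do under eq_bigr do rewrite big_mkcondr.
under [X in _ <= X]eq_bigr do rewrite exchange_big.
rewrite [X in _ <= X]exchange_big /=; apply: ler_sum => D _.
have w0 := dnp_weight_ge0 D.
have term_ge0 (A B : {set 'I_n}) :
    0 <= if [forall u in B, s * #|A|%:R <= (outdeg D u A)%:R] then dnp_weight p D else 0.
  by case: ifP.
case: ifP => [/existsP[A /andP[alA beS]]|_]; last first.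
  by apply: sumr_ge0 => A _; apply: sumr_ge0.
set S := [set u in ~: A | _] in beS.
rewrite (bigD1 A) //= (bigD1 S) //=.
have -> : [forall u in S, s * #|A|%:R <= (outdeg D u A)%:R].
  by apply/forallP => u; apply/implyP; rewrite inE => /andP[].
rewrite -addrA lerDl addr_ge0 ?sumr_ge0 // => A' _.
exact: sumr_ge0.
Qed.

Lemma dnp_prob_attracting_set_le (s al be k : R) :
  (1 < n)%N -> 0 < k -> k <= s / 4 - p / 3 ->
  6 * ln n%:R <= k * al -> 6 * ln n%:R <= k * be ->
  dnp_prob p (exists_attracting_set (n := n) s al be) <= expR 1 ^+ 2 / n%:R ^+ 2.
Proof.
move=> n1 k0 ks kal kbe; set z := (n%:R^-1 : R).
have n0 : (0 < n)%N by apply: ltnW.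
have z0 : 0 <= z by rewrite invr_ge0 ler0n.
have L0 : 0 < ln (n%:R : R) by rewrite ln_gt0 // ltr1n.
apply: le_trans (dnp_prob_attracting_set_le_sum s al be) _.
apply: (@le_trans _ _ (\sum_(A : {set 'I_n}) \sum_(B : {set 'I_n})
          z ^+ 2 * (z ^+ #|A| * z ^+ #|B|))).
  rewrite big_mkcond /=; apply: ler_sum => A _.
  case: ifP => alA; last by apply: sumr_ge0 => B _; rewrite !mulr_ge0 ?exprn_ge0.
  rewrite big_mkcond /=; apply: ler_sum => B _.
  case: ifP => beB; last by rewrite !mulr_ge0 ?exprn_ge0.
  have al0 : 0 < al by rewrite -(pmulr_rgt0 _ k0) (lt_le_trans _ kal) // mulr_gt0.
  have be0 : 0 < be by rewrite -(pmulr_rgt0 _ k0) (lt_le_trans _ kbe) // mulr_gt0.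
  have a0 : (0 < #|A|)%N by rewrite -(ltr0n R) (lt_le_trans al0).
  have b0 : (0 < #|B|)%N by rewrite -(ltr0n R) (lt_trans be0).
  apply: le_trans (dnp_prob_all_outdeg_ge_expR A B s) _.
  have ka : 6 * ln n%:R <= k * #|A|%:R by apply: (le_trans kal); rewrite ler_pM2l.
  have kb : 6 * ln n%:R <= k * #|B|%:R by apply: (le_trans kbe); rewrite ler_pM2l // ltW.
  rewrite -!exprD; apply: le_trans (expR_neg_mul_le_invn_exp n0 a0 b0 ka kb).
  by rewrite ler_expR lerN2; apply: ler_wpM2r ks; rewrite mulr_ge0.
under eq_bigr do rewrite -2!mulr_sumr.
rewrite -mulr_sumr -mulr_suml /z exprVn mulrC ler_pM2r ?invr_gt0 ?exprn_gt0 ?ltr0n //.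
have sum_ge0 : 0 <= \sum_(A : {set 'I_n}) z ^+ #|A| by apply: sumr_ge0 => A _; exact: exprn_ge0.
by rewrite expr2; apply: ler_pM => //; exact: sumr_set_inv_exp_card_le.
Qed.

End RandomDigraph.

Lemma dnp_prob_prop_i_ii_ge (R : realType) (n : nat) (c p l : R) :
  (1 < n)%N -> 0 < c -> c <= 1 -> 0 < p <= 1 -> 36 / c * ln n%:R <= l * p ^+ 2 ->
  1 - 2 * (expR 1 ^+ 2 / n%:R ^+ 2)
  <= dnp_prob p (fun D : digraph n => `[< prop_i c p l D /\ prop_ii p l D >]).
Proof.
move=> n1 c0 c1 /andP[p0 p1] lp2.
have p01 : 0 <= p <= 1 by rewrite ltW.
have L0 : 0 <= ln (n%:R : R) by rewrite ln_ge0 // ler1n ltnW.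
have clp2 : 36 * ln n%:R <= c * (l * p ^+ 2).
  by rewrite -(ler_pM2l c0) mulrA mulrCA mulfV ?gt_eqF // mulr1 in lp2.
have lp2_ge0 : 0 <= l * p ^+ 2 by rewrite (le_trans _ lp2) // mulr_ge0 // divr_ge0 // ltW.
have clp2_le := ler_piMl lp2_ge0 c1.
set q := Num.sqrt p.
have q0 : 0 < q by rewrite sqrtr_gt0.
have qq : q ^+ 2 = p by rewrite sqr_sqrtr // ltW.
have pq : p <= q by move: p1; rewrite -qq expr2; nra.
(* (i) uses k = p/6, for which 6 log n <= k (c l p) reads 36 log n <= c l p^2. *)
have bad1_le : dnp_prob p (exists_attracting_set (n := n) (2 * p) (c * l * p) (l * p))
    <= expR 1 ^+ 2 / n%:R ^+ 2.
  by apply: (dnp_prob_attracting_set_le p01 (k := p / 6)) => //; lra.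
have bad2_le : dnp_prob p (exists_attracting_set (n := n) (7 * q) (l * (p * q)) (l * (p * q)))
    <= expR 1 ^+ 2 / n%:R ^+ 2.
  have lq3 : q * (l * (p * q)) = l * p ^+ 2 by rewrite -qq; ring.
  by apply: (dnp_prob_attracting_set_le p01 (k := q)) => //; rewrite ?lq3; lra.
have cover (D : digraph n) : ~~ `[< prop_i c p l D /\ prop_ii p l D >] ->
    exists_attracting_set (2 * p) (c * l * p) (l * p) D ||
    exists_attracting_set (7 * q) (l * (p * q)) (l * (p * q)) D.
  apply: contraNT; rewrite negb_or => /andP[/no_attracting_set good1 /no_attracting_set good2].
  by apply/asboolP; split=> A /andP[alA _]; [exact: good1 | exact: good2].
by have := dnp_prob_compl_le p01 cover; lra.
Qed.

Local Open Scope classical_set_scope.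

Theorem lemma4p2 (R : realType) (c : R) (p : nat -> R) (l : nat -> nat) :
  0 < c -> c <= 1 ->
  (forall n, 0 < p n <= 1) ->
  (forall n, (l n <= n)%N) ->
  (fun n : nat => ln (n%:R : R) / (Num.sqrt (n%:R : R) * p n)) @ \oo --> (0 : R) ->
  (fun n : nat => (l n)%:R * p n ^+ 2 / ln (n%:R : R)) @ \oo --> +oo ->
  (fun n : nat =>
     dnp_prob (p n)
       (fun D : digraph n =>
          `[< prop_i c (p n) (l n)%:R D /\ prop_ii (p n) (l n)%:R D >]))
    @ \oo --> (1 : R).
Proof.
move=> c0 c1 p01 _ _ /cvgryPge lp2_big.
apply/cvgrPdist_le => eps eps0; near=> n.
have n1 : (1 < n)%N by near: n; exact: nbhs_infty_gt.
have n_big : 2 * expR 1 ^+ 2 / eps < n%:R by near: n; exact: nbhs_infty_gtr.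
have lp2 : 36 / c <= (l n)%:R * p n ^+ 2 / ln n%:R by near: n; exact: lp2_big.
rewrite ler_pdivlMr ?ln_gt0 ?ltr1n // in lp2.
have := dnp_prob_prop_i_ii_ge n1 c0 c1 (p01 n) lp2.
have /andP[p0 p1] := p01 n.
have p01' : 0 <= p n <= 1 by rewrite ltW.
rewrite ger0_norm ?subr_ge0 ?dnp_prob_le1 //.
suff : 2 * (expR 1 ^+ 2 / n%:R ^+ 2) <= eps by lra.
have n0 : (0 : R) < n%:R by rewrite ltr0n ltnW.
rewrite ltr_pdivrMr // in n_big.
rewrite mulrA ler_pdivrMr ?exprn_gt0 // expr2.
have : 1 <= (n%:R : R) by rewrite ler1n ltnW.
nra.
Unshelve. all: by end_near.
Qed.
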